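(* Let $G$ be an $X-Y$ normalized graph and let $K \neq N(X)$ be an important $X-Y$ separator of $G$. Then $K$ is a compound witness (w.r.t. $X,Y$ in $G$) of rank at most $excess(K)$.
   Context: $G$ is a finite undirected graph, $X,Y$ disjoint subsets of $V(G)$; $N(C)=(\bigcup_{v\in C}N(v))\setminus C$. An $X-Y$ separator is a set $K \subseteq V(G) \setminus (X \cup Y)$ such that $G \setminus K$ has no path from $X$ to $Y$; minimal means inclusion-minimal. A graph $H$ is $X-Y$ normalized if $N(X)$ is the only minimum-cardinality $X-Y$ separator of $H$. In $H$, let $r_H$ be the minimum size of an $X-Y$ separator; the excess of an $X-Y$ separator $K$ is $excess(K)=|K|-r_H$. $NR(H,Y,K)$ is the set of vertices not reachable from $Y$ in $H\setminus K$; $K \geq K'$ means $NR(H,Y,K)\supseteq NR(H,Y,K')$, $K'<K$ means $K\ge K'$ and the $NR$ sets differ. A minimal $X-Y$ separator $K$ is important if there is no $X-Y$ separator $K'$ with $K<K'$ and $|K|\ge |K'|$. For $S\subseteq N(X)$ with no vertex adjacent to $Y$, the cover excess $CE(S)$ is the excess of a smallest $X-Y$ separator disjoint from $S$; a witness of $S$ is an $X-Y$ separator disjoint from $S$ with excess $CE(S)$; in a normalized graph there is a unique witness of $S$ that is an important $X-Y$ separator, denoted $K(S)$. $Pr(H,X,Y,K)$ is the graph obtained from $H\setminus (NR(H,Y,K)\setminus X)$ by making $X$ adjacent to all vertices of $K$. Compound witness: for an $X-Y$ normalized graph $H$, a sequence $(S_1,\dots,S_r)$ of pairwise disjoint non-empty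 vertex sets and an $X-Y$ separator $K$, $K$ is a compound witness of the attribute $(S_1,\dots,S_r)$ w.r.t. $X,Y$ in $H$ if: when $r=1$, $S_1\subseteq N(X)$ and $K=K(S_1)$; when $r>1$, $K(S_1)$ is defined (i.e. $S_1\subseteq N(X)$, not adjacent to $Y$), $S_2\cup\dots\cup S_r$ is disjoint from $N(X)$, and $K$ is a compound witness of $(S_2,\dots,S_r)$ w.r.t. $X,Y$ in $Pr(H,X,Y,K(S_1))$. The rank of such a compound witness is $|S_1|+\dots+|S_r|$. *)

From mathcomp Require Import all_boot.
Set Implicit Arguments. Unset Strict Implicit. Unset Printing Implicit Defensive.

Section Defs.
Variable V : finType.

(* A finite simple undirected graph: a vertex set [gv] inside the ambient
   finite type V, and an edge relation [ge]; adjacency is the symmetric,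
   irreflexive closure of [ge] restricted to [gv]. *)
Record graph := Graph { gv : {set V}; ge : rel V }.

Definition adj (H : graph) (u v : V) : bool :=
  [&& u \in gv H, v \in gv H, u != v & ge H u v || ge H v u].

Definition nbh (H : graph) (C : {set V}) : {set V} :=
  [set v in gv H | (v \notin C) && [exists u in C, adj H u v]].

Definition adj_minus (H : graph) (K : {set V}) : rel V :=
  [rel u v | [&& adj H u v, u \notin K & v \notin K]].

Definition is_sep (H : graph) (X Y K : {set V}) : bool :=
  (K \subset gv H :\: (X :|: Y)) &&
  [forall x in X, forall y in Y, ~~ connect (adj_minus H K) x y].

Definition is_min_sep (H : graph) (X Y K : {set V}) : bool :=
  is_sep H X Y K && [forall K' : {set V}, (K' \proper K) ==> ~~ is_sep H X Y K'].

Definition rsep (H : graph) (X Y : {set V}) : nat :=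
  \big[minn/#|V|]_(K : {set V} | is_sep H X Y K) #|K|.

Definition excess (H : graph) (X Y K : {set V}) : nat := #|K| - rsep H X Y.

Definition is_minimum_sep (H : graph) (X Y K : {set V}) : Prop :=
  is_sep H X Y K /\ #|K| = rsep H X Y.

Definition normalized (H : graph) (X Y : {set V}) : Prop :=
  is_minimum_sep H X Y (nbh H X) /\
  forall K, is_minimum_sep H X Y K -> K = nbh H X.

Definition NR (H : graph) (Y K : {set V}) : {set V} :=
  [set v in gv H | (v \notin K) &&
     ~~ [exists y in Y, (y \in gv H) && (y \notin K) && connect (adj_minus H K) y v]].

Definition sep_lt (H : graph) (Y K' K : {set V}) : Prop :=
  NR H Y K' \subset NR H Y K /\ NR H Y K' != NR H Y K.

Definition important (H : graph) (X Y K : {set V}) : Prop :=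
  is_min_sep H X Y K /\
  ~ (exists K', is_sep H X Y K' /\ sep_lt H Y K K' /\ #|K'| <= #|K|).

Definition ce_domain (H : graph) (X Y S : {set V}) : bool :=
  (S \subset nbh H X) && [forall s in S, forall y in Y, ~~ adj H s y].

Definition CE (H : graph) (X Y S : {set V}) : nat :=
  \big[minn/#|V|]_(K : {set V} | is_sep H X Y K && [disjoint K & S]) excess H X Y K.

Definition witness (H : graph) (X Y S K : {set V}) : Prop :=
  is_sep H X Y K /\ [disjoint K & S] /\ excess H X Y K = CE H X Y S.

(* "K = K(S)": K is the (unique, in a normalized graph) important witness of S *)
Definition is_KS (H : graph) (X Y S K : {set V}) : Prop :=
  ce_domain H X Y S /\ witness H X Y S K /\ important H X Y K.

Definition Pr (H : graph) (X Y K : {set V}) : graph :=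
  Graph (gv H :\: (NR H Y K :\: X))
        [rel u v | [|| ge H u v, (u \in X) && (v \in K) | (v \in X) && (u \in K)]].

Fixpoint cwit (H : graph) (X Y : {set V}) (ss : seq {set V}) (K : {set V}) : Prop :=
  match ss with
  | [::] => False
  | [:: S1] => normalized H X Y /\ S1 \subset nbh H X /\ is_KS H X Y S1 K
  | S1 :: ss' =>
      normalized H X Y /\
      (exists K1, is_KS H X Y S1 K1 /\
        [disjoint \bigcup_(S <- ss') S & nbh H X] /\
        cwit (Pr H X Y K1) X Y ss' K)
  end.

Definition attribute (ss : seq {set V}) : Prop :=
  all (fun S => S != set0) ss /\ pairwise (fun A B : {set V} => [disjoint A & B]) ss.

Definition compound_witness (H : graph) (X Y : {set V}) (ss : seq {set V}) (K : {set V}) : Prop :=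
  attribute ss /\ cwit H X Y ss K.

Definition rank (ss : seq {set V}) : nat := \sum_(S <- ss) #|S|.

End Defs.

(* A separator [K] corresponds to the region [NR G Y K] it cuts off from [Y], and on
   regions the boundary size [#|nbh G A|] is submodular.  Let [r] be the minimum
   separator size.  Given an important [K] other than [N(X)], pick a largest [S] inside
   [N(X) \ K] such that every region containing [S] has boundary at least [r + #|S|]
   (a single vertex of [N(X)] qualifies, since [N(X)] is the unique minimum separator).
   The boundary [J] of the largest minimum-boundary region containing [S] is [K(S)]:
   it is important, its excess is at least [#|S|], and uncrossing with [NR G Y K]
   puts its region inside that of [K].  In [Pr G X Y J] the unique minimum separator
   is [N(X) = J], [K] is still important, and its excess is now
   [#|K| - #|J| <= excess K - #|S|]; induction on the excess yields the rest of the
   attribute. *)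

From mathcomp Require Import all_boot all_order zify.
Set Implicit Arguments. Unset Strict Implicit. Unset Printing Implicit Defensive.
Import Order.TTheory.

Lemma disjointP (T : finType) (A B : {set T}) :
  reflect (forall x, x \in A -> x \notin B) [disjoint A & B].
Proof. by rewrite disjoints_subset; apply: (iffP subsetP) => h x /h; rewrite inE. Qed.

Lemma bigminn_le (I : finType) (P : pred I) (F : I -> nat) d j :
  P j -> \big[minn/d]_(i | P i) F i <= F j.
Proof. exact: (bigmin_le_cond (T := nat)). Qed.

Lemma bigminn_attained (I : finType) (P : pred I) (F : I -> nat) d j :
  P j -> (forall i, P i -> F i <= d) -> exists2 i, P i & \big[minn/d]_(i | P i) F i = F i.
Proof. by move=> Pj Fd; have [i Pi e] := eq_bigmin (T := nat) _ _ _ Pj Fd; exists i. Qed.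

Lemma connect_closed (T : finType) (e : rel T) (A : {set T}) x y :
  (forall u v, u \in A -> e u v -> v \in A) -> x \in A -> connect e x y -> y \in A.
Proof.
move=> clA xA /connectP[p + ->]; elim: p x xA => //= z p IHp x xA /andP[exz].
exact: IHp (clA _ _ xA exz).
Qed.

Lemma setUDD (T : finType) (B C D : {set T}) : C \subset B -> (B :\: (C :\: D)) :|: C = B.
Proof.
move=> CB; apply/setP=> v; rewrite !inE.
by case vC: (v \in C); case: (v \in D); rewrite ?(subsetP CB _ vC) ?andbT ?orbF.
Qed.

(** * Separators and regions *)

Section Graph.
Variables (V : finType) (H : graph V) (X Y : {set V}).
Implicit Types (A B K Z S : {set V}).

Lemma adj_sym : symmetric (adj H).
Proof.
by move=> u v; rewrite /adj eq_sym orbC; case: (u \in gv H); case: (v \in gv H).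
Qed.

Lemma connect_minus_sym K : connect_sym (adj_minus H K).
Proof.
apply: sym_connect_sym => u v; rewrite /adj_minus /= adj_sym.
by case: (u \in K); case: (v \in K); rewrite ?andbF.
Qed.

Lemma nbhP A v :
  reflect [/\ v \in gv H, v \notin A & exists2 u, u \in A & adj H u v] (v \in nbh H A).
Proof.
rewrite inE; apply: (iffP idP) => [/and3P[vH vA /existsP[u /andP[uA uv]]]|[-> -> [u uA uv]]].
  by split=> //; exists u.
by apply/existsP; exists u; rewrite uA.
Qed.

Lemma NRP K v :
  reflect [/\ v \in gv H, v \notin K &
     forall y, y \in Y -> y \in gv H -> y \notin K -> ~~ connect (adj_minus H K) y v]
   (v \in NR H Y K).
Proof.
rewrite inE; apply: (iffP idP) => [/and3P[vH vK /existsPn yv]|[-> -> yv]].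
  by split=> // y yY yH yK; have := yv y; rewrite yY yH yK.
apply/existsPn=> y; apply/negP=> /andP[yY /andP[/andP[yH yK] c]].
by move: (yv y yY yH yK); rewrite c.
Qed.

Lemma is_sepP K :
  reflect (K \subset gv H :\: (X :|: Y) /\
           forall x y, x \in X -> y \in Y -> ~~ connect (adj_minus H K) x y)
          (is_sep H X Y K).
Proof.
apply: (iffP andP) => [[KH /forall_inP xy]|[KH xy]]; split=> //.
  by move=> x y xX yY; move/forall_inP: (xy x xX); apply.
by apply/forall_inP=> x xX; apply/forall_inP=> y; apply: xy.
Qed.

Lemma sep_vertex K v : is_sep H X Y K -> v \in K ->
  [/\ v \in gv H, v \notin X & v \notin Y].
Proof. by case/is_sepP=> /subsetP KH _ /KH; rewrite !inE negb_or => /andP[/andP[-> ->]]. Qed.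

(* The sets cut off from [Y] by a separator: [K] yields the region [NR H Y K], and a
   region [A] yields the separator [nbh H A]. *)
Definition region A :=
  [&& X \subset A, A \subset gv H, [disjoint A & Y] & [disjoint nbh H A & Y]].

Lemma nbh_closed A u v : u \in A -> adj_minus H (nbh H A) u v -> v \in A.
Proof.
move=> uA /and3P[uv _]; apply: contraNT => vA.
by apply/nbhP; split=> //; [case/and4P: uv | exists u].
Qed.

Lemma region_sep A : region A -> is_sep H X Y (nbh H A).
Proof.
case/and4P=> /subsetP XA _ AY NY; apply/is_sepP; split.
  apply/subsetP=> v vN; case/nbhP: (vN) => vH vA _.
  rewrite !inE vH negb_or (disjointFr NY vN) !andbT.
  by apply: contra vA; apply: XA.
move=> x y xX yY; apply/negP=> /(connect_closed (@nbh_closed A) (XA x xX)) yA.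
by rewrite (disjointFr AY yA) in yY.
Qed.

Lemma region_sub_NR A : region A -> A \subset NR H Y (nbh H A).
Proof.
case/and4P=> _ /subsetP AH AY _; apply/subsetP=> v vA; apply/NRP; split.
- exact: AH.
- by apply: contraL vA => /nbhP[].
move=> y yY _ _; apply/negP; rewrite connect_minus_sym.
move=> /(connect_closed (@nbh_closed A) vA) yA.
by rewrite (disjointFr AY yA) in yY.
Qed.

Lemma nbh_NR_sub K : nbh H (NR H Y K) \subset K.
Proof.
apply/subsetP=> v /nbhP[vH + [u uR uv]]; apply: contraR => vK.
case/NRP: uR => _ uK uY; apply/NRP; split=> // y yY yH yK.
move: (uY y yY yH yK); apply: contra => yv.
by apply: connect_trans yv (connect1 _); rewrite /adj_minus /= adj_sym uv vK uK.
Qed.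

Lemma NR_region K : X \subset gv H -> is_sep H X Y K -> region (NR H Y K).
Proof.
move=> /subsetP XH sK; have [_ XY] := is_sepP _ sK; apply/and4P; split.
- apply/subsetP=> x xX; apply/NRP; split; first exact: XH.
    by apply: contraL xX => /(sep_vertex sK)[].
  by move=> y yY _ _; rewrite connect_minus_sym XY.
- by apply/subsetP=> v /NRP[].
- apply/disjointP=> v /NRP[vH vK vY]; apply/negP=> Yv.
  by move: (vY v Yv vH vK); rewrite connect0.
- by apply/disjointP=> v /(subsetP (nbh_NR_sub K)) /(sep_vertex sK)[].
Qed.

Lemma min_sep_nbh_NR K : X \subset gv H -> is_min_sep H X Y K -> nbh H (NR H Y K) = K.
Proof.
move=> XH /andP[sK /forall_inP minK]; apply/eqP; rewrite eqEproper nbh_NR_sub /=.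
by apply: contraL (region_sep (NR_region XH sK)) => /minK.
Qed.

Lemma nbh_sub_mem A v : X \subset A -> v \in nbh H X -> v \notin nbh H A -> v \in A.
Proof.
move=> /subsetP XA /nbhP[vH vX [u uX uv]]; apply: contraNT => vA.
by apply/nbhP; split=> //; exists u => //; apply: XA.
Qed.

Lemma nbhU_sub A B : nbh H (A :|: B) \subset nbh H A :|: nbh H B.
Proof.
apply/subsetP=> v /nbhP[vH]; rewrite in_setU negb_or => /andP[vA vB] [u].
by case/setUP=> [uA|uB] uv; apply/setUP; [left|right]; apply/nbhP; split=> //; exists u.
Qed.

Lemma nbhI_sub A B : nbh H (A :&: B) \subset nbh H A :|: nbh H B.
Proof.
apply/subsetP=> v /nbhP[vH vAB [u /setIP[uA uB] uv]]; apply/setUP.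
case vA: (v \in A); [right|left]; apply/nbhP; split; rewrite ?vA //.
- by rewrite in_setI vA in vAB.
- by exists u.
- by exists u.
Qed.

Lemma nbh_submod A B :
  #|nbh H (A :|: B)| + #|nbh H (A :&: B)| <= #|nbh H A| + #|nbh H B|.
Proof.
rewrite -cardsUI -[#|nbh H A| + _]cardsUI leq_add // subset_leq_card //.
  by rewrite subUset nbhU_sub nbhI_sub.
apply/subsetP=> v /setIP[/nbhP[vH]]; rewrite in_setU negb_or => /andP[vA vB] _.
case/nbhP=> _ _ [u /setIP[uA uB] uv].
by apply/setIP; split; apply/nbhP; split=> //; exists u.
Qed.

Lemma regionU A B : region A -> region B -> region (A :|: B).
Proof.
case/and4P=> XA AH AY NA /and4P[_ BH BY NB]; apply/and4P; split.
- by rewrite subsetU ?XA.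
- by rewrite subUset AH.
- by rewrite disjoints_subset subUset -!disjoints_subset AY.
apply: disjointWl (nbhU_sub A B) _.
by rewrite disjoints_subset subUset -!disjoints_subset NA.
Qed.

Lemma regionI A B : region A -> region B -> region (A :&: B).
Proof.
case/and4P=> XA AH AY NA /and4P[XB _ _ NB]; apply/and4P; split.
- by rewrite subsetI XA.
- exact: subset_trans (subsetIl A B) AH.
- exact: disjointWl (subsetIl A B) AY.
apply: disjointWl (nbhI_sub A B) _.
by rewrite disjoints_subset subUset -!disjoints_subset NA.
Qed.

Lemma rsep_le K : is_sep H X Y K -> rsep H X Y <= #|K|.
Proof. exact: bigminn_le. Qed.

Lemma rsep_attained K : is_sep H X Y K -> exists2 K0, is_sep H X Y K0 & rsep H X Y = #|K0|.
Proof.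
by move=> sK; apply: bigminn_attained sK _ => Z _; apply: max_card.
Qed.

Lemma region_rsep A : region A -> rsep H X Y <= #|nbh H A|.
Proof. by move=> /region_sep; apply: rsep_le. Qed.

(* The boundary [nbh H A] of an optimal region of [S] is the paper's [K(S)]. *)
Definition optimal_region S A :=
  [/\ region A, S \subset A,
      forall B, region B -> S \subset B -> #|nbh H A| <= #|nbh H B| &
      forall B, region B -> S \subset B -> #|nbh H B| = #|nbh H A| -> B \subset A].

(* Regions of minimum boundary containing [S] are closed under union by submodularity,
   so the largest one contains all the others. *)
Lemma optimal_region_exists S B0 : region B0 -> S \subset B0 -> exists A, optimal_region S A.
Proof.
move=> rB0 SB0; pose P B := region B && (S \subset B).
have PB0 : P B0 by rewrite /P rB0.
have [Am /andP[rAm SAm] minAm] := @arg_minnP _ B0 P (fun B => #|nbh H B|) PB0.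
pose Q B := P B && (#|nbh H B| == #|nbh H Am|).
have QAm : Q Am by rewrite /Q /P rAm SAm eqxx.
have [A /andP[/andP[rA SA] /eqP eA] maxA] := @arg_maxnP _ Am Q (fun B => #|B|) QAm.
exists A; split=> // [B rB SB|B rB SB eB]; first by rewrite eA minAm // /P rB SB.
have PU : P (B :|: A) by rewrite /P regionU // subsetU ?SB.
have PI : P (B :&: A) by rewrite /P regionI // subsetI SB SA.
have := nbh_submod B A; rewrite eB eA => sub.
have /maxA cU : Q (B :|: A).
  by rewrite /Q PU eqn_leq minAm // andbT; move: (minAm _ PI); lia.
have /eqP -> : A == B :|: A by rewrite eqEcard subsetUr; exact: cU.
exact: subsetUl.
Qed.

(* [cover_bounded S] states [CE(S) >= #|S|], measured on regions. *)
Definition cover_bounded S : bool :=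
  [forall A, region A && (S \subset A) ==> (#|S| + rsep H X Y <= #|nbh H A|)].

Lemma cover_boundedP S :
  reflect (forall A, region A -> S \subset A -> #|S| + rsep H X Y <= #|nbh H A|)
          (cover_bounded S).
Proof.
apply: (iffP forallP) => [h A rA SA|h A]; first by move/implyP: (h A); apply; rewrite rA.
by apply/implyP=> /andP[rA SA]; apply: h.
Qed.

(* A region containing [s] with boundary of size [rsep H X Y] would have [nbh H X] as
   boundary, but [s] lies inside the region. *)
Lemma cover_bounded1 s : normalized H X Y -> s \in nbh H X -> cover_bounded [set s].
Proof.
move=> [_ uniqN] sN; apply/cover_boundedP=> A rA; rewrite sub1set cards1 add1n => sA.
rewrite ltn_neqAle region_rsep // andbT; apply/eqP=> eA.
have NA : nbh H A = nbh H X by apply: uniqN; split; [apply: region_sep|].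
have : s \in nbh H A by rewrite NA.
by case/nbhP=> _; rewrite sA.
Qed.

Section OptimalWitness.
Variables S A : {set V}.
Hypotheses (XH : X \subset gv H) (SN : S \subset nbh H X) (optA : optimal_region S A).

Lemma sep_disjoint_sub_NR Z : is_sep H X Y Z -> [disjoint S & Z] -> S \subset NR H Y Z.
Proof.
move=> sZ SZ; apply/subsetP=> v vS.
apply: nbh_sub_mem (subsetP SN _ vS) _; first by case/and4P: (NR_region XH sZ).
by apply: contraL vS => /(subsetP (nbh_NR_sub Z)) vZ; rewrite (disjointFl SZ vZ).
Qed.

Lemma optimal_region_NR : NR H Y (nbh H A) = A.
Proof.
have [rA SA minA maxA] := optA.
have sJ := region_sep rA; have rNR := NR_region XH sJ.
have SNR := subset_trans SA (region_sub_NR rA).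
apply/eqP; rewrite eqEsubset region_sub_NR // andbT; apply: maxA => //.
by apply/eqP; rewrite eqn_leq minA // andbT subset_leq_card // nbh_NR_sub.
Qed.

Lemma optimal_disjoint_nbh : [disjoint S & nbh H A].
Proof.
have [_ SA _ _] := optA; apply/disjointP=> v /(subsetP SA) vA.
by apply: contraL vA => /nbhP[].
Qed.

Lemma optimal_sep_bound Z : is_sep H X Y Z -> [disjoint S & Z] -> #|nbh H A| <= #|Z|.
Proof.
have [_ _ minA _] := optA => sZ SZ.
apply: leq_trans (minA _ (NR_region XH sZ) (sep_disjoint_sub_NR sZ SZ)) _.
exact/subset_leq_card/nbh_NR_sub.
Qed.

Lemma optimal_min_sep : is_min_sep H X Y (nbh H A).
Proof.
have [rA _ _ _] := optA; rewrite /is_min_sep region_sep //=.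
apply/forall_inP=> Z ZA; apply/negP=> sZ.
have SZ : [disjoint S & Z] := disjointWr (proper_sub ZA) optimal_disjoint_nbh.
by have := optimal_sep_bound sZ SZ; rewrite leqNgt proper_card.
Qed.

Lemma optimal_important : important H X Y (nbh H A).
Proof.
have [_ SA minA maxA] := optA; split; first exact: optimal_min_sep.
case=> K' [sK' [[le ne] K'A]]; rewrite optimal_region_NR in le ne.
have rK' := NR_region XH sK'.
have SK' : S \subset NR H Y K' := subset_trans SA le.
have eK' : #|nbh H (NR H Y K')| = #|nbh H A|.
  apply/eqP; rewrite eqn_leq minA // andbT.
  exact: leq_trans (subset_leq_card (nbh_NR_sub K')) K'A.
by move/negP: ne; apply; rewrite eqEsubset le maxA.
Qed.

Lemma optimal_witness : witness H X Y S (nbh H A).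
Proof.
have [rA _ _ _] := optA; have sJ := region_sep rA.
have SJ : [disjoint nbh H A & S] by rewrite disjoint_sym optimal_disjoint_nbh.
split=> //; split=> //; rewrite /CE.
pose P Z := is_sep H X Y Z && [disjoint Z & S].
have PJ : P (nbh H A) by rewrite /P sJ.
have := @bigminn_le _ P (excess H X Y) #|V| _ PJ.
have [Z /andP[sZ ZS] -> le] := @bigminn_attained _ P (excess H X Y) #|V| _ PJ
  (fun Z _ => leq_trans (leq_subr _ _) (max_card (mem Z))).
by apply/eqP; rewrite eqn_leq le /excess leq_sub2r // optimal_sep_bound // disjoint_sym.
Qed.

Lemma optimal_ce_domain : ce_domain H X Y S.
Proof.
have /and4P[_ _ AY NY] : region A by case: optA.
have [_ SA _ _] := optA.
rewrite /ce_domain SN; apply/forall_inP=> v vS; apply/forall_inP=> y yY.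
apply/negP=> vy; have vA := subsetP SA _ vS.
have yA : y \notin A by apply: contraL yY => /(disjointFr AY) ->.
have yN : y \in nbh H A by apply/nbhP; split=> //; [case/and4P: vy | exists v].
by rewrite (disjointFr NY yN) in yY.
Qed.

Lemma optimal_is_KS : is_KS H X Y S (nbh H A).
Proof.
split; first exact: optimal_ce_domain.
by split; [apply: optimal_witness | apply: optimal_important].
Qed.

End OptimalWitness.

End Graph.

(** * The projected graph [Pr H X Y J] *)

Section Projection.
Variables (V : finType) (H : graph V) (X Y J : {set V}).
Implicit Types (A B C Z : {set V}).
Local Notation HJ := (Pr H X Y J).

Lemma in_gv_Pr v : (v \in gv HJ) = (v \in gv H) && ((v \notin NR H Y J) || (v \in X)).
Proof.
rewrite /= in_setD in_setD negb_and negbK andbC.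
by case: (v \in X); case: (v \in NR H Y J); rewrite ?andbT ?andbF ?orbT.
Qed.

Lemma disjoint_gv_Pr C : C \subset NR H Y J -> [disjoint C & X] -> [disjoint C & gv HJ].
Proof.
move=> /subsetP CR CX; apply/disjointP=> v vC.
by rewrite in_gv_Pr CR //= (disjointFr CX vC) andbF.
Qed.

Lemma adj_Pr u v : adj H u v -> u \in gv HJ -> v \in gv HJ -> adj HJ u v.
Proof.
case/and4P=> _ _ uv e uJ vJ; rewrite /adj uJ vJ uv /=.
by case/orP: e => ->; rewrite ?orbT.
Qed.

Lemma adj_Pr_XJ x k : x \in X -> k \in J -> x != k -> x \in gv HJ -> k \in gv HJ ->
  adj HJ x k.
Proof. by move=> xX kJ xk xJ kJ'; rewrite /adj xJ kJ' xk /= xX kJ orbT. Qed.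

Lemma adj_PrP u v : adj HJ u v ->
  [/\ u \in gv HJ, v \in gv HJ &
      [\/ adj H u v, (u \in X) && (v \in J) | (v \in X) && (u \in J)]].
Proof.
case/and4P=> uJ vJ uv e; split=> //.
have [uH vH] : (u \in gv H) /\ (v \in gv H).
  by move: uJ vJ; rewrite !in_gv_Pr => /andP[-> _] /andP[-> _].
move: e => /= /orP[/or3P[e|e|e] | /or3P[e|e|e]].
- by apply: Or31; rewrite /adj uH vH uv e.
- exact: Or32.
- exact: Or33.
- by apply: Or31; rewrite /adj uH vH uv e orbT.
- exact: Or33.
- exact: Or32.
Qed.

Hypotheses (XH : X \subset gv H) (X_neq0 : X != set0) (mJ : is_min_sep H X Y J).

Lemma X_sub_gv_Pr : X \subset gv HJ.
Proof. by apply/subsetP=> v vX; rewrite in_gv_Pr vX orbT andbT (subsetP XH). Qed.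

(* The new edges from [X] to [J] replace the paths through the removed region. *)
Lemma nbh_Pr A : X \subset A -> A \subset gv HJ -> nbh HJ A = nbh H (A :|: NR H Y J).
Proof.
move=> /subsetP XA /subsetP AJ; have [x0 x0X] := set0Pn _ X_neq0.
have eJ := min_sep_nbh_NR XH mJ.
apply/setP=> v; apply/idP/idP.
  case/nbhP=> vJ vA [u uA /adj_PrP[_ _ e]].
  have vX : v \notin X by apply: contra vA; apply: XA.
  move: (vJ); rewrite in_gv_Pr (negbTE vX) orbF => /andP[vH vR].
  apply/nbhP; split=> //; first by rewrite in_setU negb_or vA.
  case: e => [uv | /andP[_ vJ'] | /andP[vX'] _]; last by rewrite vX' in vX.
    by exists u; rewrite ?in_setU ?uA.
  by move: vJ'; rewrite -{1}eJ => /nbhP[_ _ [w wR wv]]; exists w; rewrite ?in_setU ?wR ?orbT.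
case/nbhP=> vH; rewrite in_setU negb_or => /andP[vA vR] [u].
have vJ : v \in gv HJ by rewrite in_gv_Pr vH vR.
case/setUP=> [uA | uR] uv.
  by apply/nbhP; split=> //; exists u => //; apply: adj_Pr uv (AJ u uA) vJ.
have vJ' : v \in J by rewrite -eJ; apply/nbhP; split=> //; exists u.
apply/nbhP; split=> //; exists x0; first exact: XA.
apply: adj_Pr_XJ => //; last by apply: AJ; apply: XA.
by apply: contraNneq vA => <-; apply: XA.
Qed.

Lemma nbh_Pr_X : nbh HJ X = J.
Proof.
have sJ : is_sep H X Y J by case/andP: mJ.
have /and4P[XR _ _ _] := NR_region XH sJ.
by rewrite nbh_Pr ?X_sub_gv_Pr // (setUidPr XR) (min_sep_nbh_NR XH mJ).
Qed.

Lemma region_Pr_X : [disjoint X & Y] -> region HJ X Y X.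
Proof.
move=> XY; have sJ : is_sep H X Y J by case/andP: mJ.
rewrite /region subxx X_sub_gv_Pr XY nbh_Pr_X /=.
by apply/disjointP=> v /(sep_vertex sJ)[].
Qed.

Lemma region_Pr_lift A : region HJ X Y A -> region H X Y (A :|: NR H Y J).
Proof.
case/and4P=> XA AJ AY NA; have sJ : is_sep H X Y J by case/andP: mJ.
have /and4P[_ RH RY _] := NR_region XH sJ.
apply/and4P; split.
- by rewrite subsetU ?XA.
- by rewrite subUset RH (subset_trans AJ) ?subsetDl.
- by rewrite disjoints_subset subUset -!disjoints_subset AY.
- by rewrite -nbh_Pr.
Qed.

Lemma region_Pr_restrict B : region H X Y B -> NR H Y J \subset B ->
  region HJ X Y (B :\: (NR H Y J :\: X)).
Proof.
case/and4P=> XB BH BY NB RB.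
have XB' : X \subset B :\: (NR H Y J :\: X).
  by apply/subsetP=> v vX; rewrite !in_setD vX /= (subsetP XB).
have BJ : B :\: (NR H Y J :\: X) \subset gv HJ by apply: setSD.
apply/and4P; split=> //.
- by apply: disjointWl BY; apply: subsetDl.
- by rewrite nbh_Pr // setUDD.
Qed.

Lemma Pr_sep_lift Z : is_sep HJ X Y Z ->
  [/\ region HJ X Y (NR HJ Y Z), region H X Y (NR HJ Y Z :|: NR H Y J) &
      nbh H (NR HJ Y Z :|: NR H Y J) \subset Z].
Proof.
move=> sZ; have rA := NR_region X_sub_gv_Pr sZ.
split=> //; first exact: region_Pr_lift.
by case/and4P: (rA) => XA AJ _ _; rewrite -nbh_Pr //; apply: nbh_NR_sub.
Qed.

(* A separator of [Pr H X Y J] beating [K] would lift to one of [H] beating [K]. *)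
Lemma Pr_important K : important H X Y K -> NR H Y J \subset NR H Y K ->
  important HJ X Y K.
Proof.
move=> [mK notK] JK; have /andP[sK /forall_inP minK] := mK.
have eK := min_sep_nbh_NR XH mK.
set B := NR H Y K :\: (NR H Y J :\: X).
have rB : region HJ X Y B := region_Pr_restrict (NR_region XH sK) JK.
have NB : nbh HJ B = K by case/and4P: (rB) => XB BJ _ _; rewrite nbh_Pr // setUDD.
have BK : B \subset NR HJ Y K by rewrite -NB (region_sub_NR rB).
split.
  rewrite /is_min_sep -{1}NB region_sep //=; apply/forall_inP=> Z ZK; apply/negP=> sZ.
  have [_ rA NZ] := Pr_sep_lift sZ.
  by move: (minK _ (sub_proper_trans NZ ZK)); rewrite region_sep.
case=> K' [sK' [[le ne] leK']].
have [rA rAR NK'] := Pr_sep_lift sK'.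
set A := NR HJ Y K' in rA rAR NK' le ne.
set W := nbh H (A :|: NR H Y J) in rAR NK'.
have KA : NR H Y K \subset A :|: NR H Y J.
  by rewrite -(setUDD X JK); apply: setSU; apply: subset_trans BK le.
have eKW : NR H Y K = NR H Y W.
  apply/eqP/negPn/negP => ne'; apply: notK; exists W; split; first exact: region_sep.
  split; last exact: leq_trans (subset_leq_card NK') leK'.
  by split=> //; apply: subset_trans KA (region_sub_NR rAR).
have AB : A \subset B.
  apply/subsetP=> v vA; case/and4P: rA => _ /subsetP AJ _ _.
  case/setDP: (AJ v vA) => _ vR; rewrite in_setD vR eKW.
  by apply: (subsetP (region_sub_NR rAR)); rewrite in_setU vA.
by move/negP: ne; apply; rewrite eqEsubset le (subset_trans AB).
Qed.

Variable S : {set V}.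
Hypothesis optJ : optimal_region H X Y S (NR H Y J).

(* Lifting [Z] to [H], optimality of [NR H Y J] gives [#|J| <= #|Z|], with equality
   only if the region of [Z] in [Pr H X Y J] is [X] itself. *)
Lemma Pr_sep_card Z : is_sep HJ X Y Z -> #|J| <= #|Z| /\ (#|Z| = #|J| -> Z = J).
Proof.
move=> sZ; have [rA rAR NZ] := Pr_sep_lift sZ.
have [_ SR minJ maxJ] := optJ; rewrite (min_sep_nbh_NR XH mJ) in minJ maxJ.
set A := NR HJ Y Z in rA rAR NZ *.
have SA : S \subset A :|: NR H Y J := subset_trans SR (subsetUr _ _).
have leJ := minJ _ rAR SA.
split=> [|eZ]; first exact: leq_trans leJ (subset_leq_card NZ).
have eN : #|nbh H (A :|: NR H Y J)| = #|J|.
  by apply/eqP; rewrite eqn_leq leJ -eZ subset_leq_card.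
case/and4P: rA => XA AJ _ _.
have AX : A \subset X.
  apply/subsetP=> v vA.
  have vR : v \in NR H Y J by apply: (subsetP (maxJ _ rAR SA eN)); rewrite in_setU vA.
  by move: (subsetP AJ v vA); rewrite in_gv_Pr vR /= => /andP[].
have -> : Z = nbh H (A :|: NR H Y J) by apply/eqP; rewrite eq_sym eqEcard NZ eZ eN leqnn.
rewrite -nbh_Pr //.
have /eqP -> : A == X by rewrite eqEsubset AX XA.
exact: nbh_Pr_X.
Qed.

Lemma Pr_rsep : [disjoint X & Y] -> rsep HJ X Y = #|J|.
Proof.
move=> XY; have sJ : is_sep HJ X Y J by rewrite -{2}nbh_Pr_X region_sep ?region_Pr_X.
have [Z0 sZ0 eZ0] := rsep_attained sJ.
by apply/eqP; rewrite eqn_leq rsep_le // eZ0 (Pr_sep_card sZ0).1.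
Qed.

Lemma Pr_normalized : [disjoint X & Y] -> normalized HJ X Y.
Proof.
move=> XY; rewrite /normalized /is_minimum_sep nbh_Pr_X Pr_rsep //.
split=> [|Z [sZ eZ]]; last exact: (Pr_sep_card sZ).2.
by split=> //; rewrite -{2}nbh_Pr_X region_sep ?region_Pr_X.
Qed.

End Projection.

(** * Compound witnesses of important separators *)

Section ImportantSeparator.
Variables (V : finType) (H : graph V) (X Y K : {set V}).
Implicit Types (S : {set V}).
Hypotheses (XH : X \subset gv H) (XY : [disjoint X & Y]) (nH : normalized H X Y)
  (iK : important H X Y K) (KN : K != nbh H X).

Lemma important_X_neq0 : X != set0.
Proof.
apply: contra KN => /eqP X0; have [/andP[_ /forall_inP minK] _] := iK.
have -> : nbh H X = set0.
  by apply/eqP; rewrite -subset0; apply/subsetP=> v /nbhP[_ _ [u]]; rewrite X0 inE.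
apply/negPn/negP => K0.
have sep0 : is_sep H X Y set0 by apply/is_sepP; split=> [|x y]; rewrite ?sub0set // X0 inE.
by move: (minK set0); rewrite proper0 K0 sep0 => /(_ isT).
Qed.

Lemma nbh_X_diff_sub_NR : nbh H X :\: K \subset NR H Y K.
Proof.
have [mK _] := iK; have sK : is_sep H X Y K by case/andP: mK.
have /and4P[XR _ _ _] := NR_region XH sK.
apply/subsetP=> v /setDP[vN vK]; apply: nbh_sub_mem XR vN _.
by rewrite (min_sep_nbh_NR XH mK).
Qed.

Lemma exists_nbh_X_diff : exists s, s \in nbh H X :\: K.
Proof.
have [[sN _] _] := nH; have [/andP[_ /forall_inP minK] _] := iK.
have : ~~ (nbh H X \subset K).
  by move: sN; apply: contraL => NK; apply: minK; rewrite properEneq NK andbT eq_sym.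
by case/subsetPn=> s sNX sK; exists s; rewrite in_setD sK.
Qed.

Lemma maximal_cover_exists : exists S,
  [/\ S \subset nbh H X :\: K, S != set0, cover_bounded H X Y S &
      forall t, t \in nbh H X :\: K -> t \notin S -> ~~ cover_bounded H X Y (t |: S)].
Proof.
have [s sD] := exists_nbh_X_diff.
pose P S := (S \subset nbh H X :\: K) && cover_bounded H X Y S.
have Ps : P [set s].
  by rewrite /P sub1set sD cover_bounded1 //; case/setDP: sD.
have [S /andP[SD bS] maxS] := @arg_maxnP _ [set s] P (fun S => #|S|) Ps.
exists S; split=> //.
  by rewrite -card_gt0; apply: leq_trans (maxS _ Ps); rewrite cards1.
move=> t tD tS; apply/negP=> bt.
have PtS : P (t |: S) by rewrite /P bt subUset sub1set tD SD.
have le : #|t |: S| <= #|S| := maxS _ PtS.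
by rewrite cardsU1 tS /= add1n ltnn in le.
Qed.

Section Witness.
Variables S A : {set V}.
Hypotheses (SD : S \subset nbh H X :\: K) (bS : cover_bounded H X Y S)
  (maxS : forall t, t \in nbh H X :\: K -> t \notin S -> ~~ cover_bounded H X Y (t |: S))
  (optA : optimal_region H X Y S A).

Lemma optimal_card_le : #|nbh H A| <= #|K|.
Proof.
have [mK _] := iK; have sK : is_sep H X Y K by case/andP: mK.
have [_ _ minA _] := optA; rewrite -(min_sep_nbh_NR XH mK).
by apply: minA (NR_region XH sK) (subset_trans SD nbh_X_diff_sub_NR).
Qed.

Lemma nbh_X_diff_sub_optimal : nbh H X :\: K \subset A.
Proof.
have [rA SA minA maxA] := optA.
apply/subsetP=> t tD; apply: contraT => tA.
have tS : t \notin S by apply: contra tA; apply: (subsetP SA).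
have bt : cover_bounded H X Y (t |: S).
  apply/cover_boundedP=> B rB; rewrite subUset sub1set => /andP[tB SB].
  have ne : #|nbh H A| != #|nbh H B|.
    by move: tA; apply: contraNneq => /esym/(maxA _ rB SB)/subsetP/(_ t tB).
  rewrite cardsU1 tS /= add1n addSn.
  apply: leq_ltn_trans (cover_boundedP _ _ _ _ bS A rA SA) _.
  by rewrite ltn_neqAle ne minA.
by move: (maxS tD tS); rewrite bt.
Qed.

(* Uncrossing [A] with the region of [K]: by submodularity the union has boundary at
   most [#|K|], so the importance of [K] forces the union back inside [NR H Y K]. *)
Lemma optimal_sub_NR : A \subset NR H Y K.
Proof.
have [mK notK] := iK; have sK : is_sep H X Y K by case/andP: mK.
have eK := min_sep_nbh_NR XH mK; have rK := NR_region XH sK.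
have [rA SA minA _] := optA.
have SK : S \subset NR H Y K := subset_trans SD nbh_X_diff_sub_NR.
have rU := regionU rA rK; set W := nbh H (A :|: NR H Y K).
have leI := minA _ (regionI rA rK) (introT subsetIP (conj SA SK)).
have := nbh_submod H A (NR H Y K); rewrite eK -/W => sub.
have eW : NR H Y K = NR H Y W.
  apply/eqP/negPn/negP => ne; apply: notK; exists W; split; first exact: region_sep.
  split.
    by split=> //; apply: subset_trans (subsetUr A _) (region_sub_NR rU).
  by rewrite -(leq_add2r #|nbh H (A :&: NR H Y K)|) (leq_trans sub) // addnC leq_add2l.
by rewrite eW; apply: subset_trans (subsetUl _ _) (region_sub_NR rU).
Qed.

Lemma Pr_optimal :
  [/\ normalized (Pr H X Y (nbh H A)) X Y, important (Pr H X Y (nbh H A)) X Y K,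
      rsep (Pr H X Y (nbh H A)) X Y = #|nbh H A|, nbh (Pr H X Y (nbh H A)) X = nbh H A &
      [disjoint nbh H X :\: K & gv (Pr H X Y (nbh H A))]].
Proof.
have SN : S \subset nbh H X := subset_trans SD (subsetDl _ _).
have mJ := optimal_min_sep XH SN optA; have eA := optimal_region_NR XH optA.
have X0 := important_X_neq0.
have optJ : optimal_region H X Y S (NR H Y (nbh H A)) by rewrite eA.
split.
- exact: (Pr_normalized XH X0 mJ optJ XY).
- by apply: (Pr_important XH X0 mJ iK); rewrite eA optimal_sub_NR.
- exact: (Pr_rsep XH X0 mJ optJ XY).
- exact: (nbh_Pr_X XH X0 mJ).
rewrite disjoint_gv_Pr ?eA ?nbh_X_diff_sub_optimal //.
by apply/disjointP=> v /setDP[/nbhP[]].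
Qed.

End Witness.

End ImportantSeparator.

Lemma compound_witness_cons (V : finType) (H : graph V) (X Y S J K : {set V})
    (ss : seq {set V}) :
  normalized H X Y -> is_KS H X Y S J -> S != set0 ->
  [disjoint S & gv (Pr H X Y J)] -> [disjoint nbh H X :\: K & gv (Pr H X Y J)] ->
  all (fun T : {set V} => (T \subset gv (Pr H X Y J)) && [disjoint T & K]) ss ->
  compound_witness (Pr H X Y J) X Y ss K -> compound_witness H X Y (S :: ss) K.
Proof.
move=> nH KSJ S0 SJ DJ inv [[ss0 ssD] cw].
have ssN : [disjoint \bigcup_(T <- ss) T & nbh H X].
  apply/disjointP=> v; rewrite bigcup_seq => /bigcupP[T Tss vT].
  have /andP[/subsetP TJ TK] := allP inv T Tss.
  apply: contraL (TJ v vT) => vN.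
  by rewrite (disjointFr DJ) // in_setD vN (disjointFr TK vT).
split; last by case: ss inv ssN ss0 ssD cw => // T ss *; split=> //; exists J.
split; first by rewrite /= S0.
rewrite /= ssD andbT; apply/allP=> T /(allP inv)/andP[TJ _].
exact: disjointWr TJ SJ.
Qed.

Lemma important_compound_witness (V : finType) (X Y : {set V}) n (H : graph V) (K : {set V}) :
  excess H X Y K < n ->
  X \subset gv H -> [disjoint X & Y] ->
  normalized H X Y -> important H X Y K -> K != nbh H X ->
  exists ss : seq {set V},
    [/\ compound_witness H X Y ss K, rank ss <= excess H X Y K &
        all (fun S : {set V} => (S \subset gv H) && [disjoint S & K]) ss].
Proof.
elim: n H => // n IHn H excK XH XY nH iK KN.
have [S [SD S0 bS maxS]] := maximal_cover_exists nH iK KN.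
have /andP[SN SK] : (S \subset nbh H X) && [disjoint S & K] by rewrite -subsetD.
have [mK _] := iK; have sK : is_sep H X Y K by case/andP: mK.
have [A optA] := optimal_region_exists (NR_region XH sK)
  (subset_trans SD (nbh_X_diff_sub_NR XH iK)).
have [rA SA _ _] := optA; set J := nbh H A.
have SH : S \subset gv H by apply: subset_trans SN _; apply/subsetP=> v /nbhP[].
have bndS : #|S| + rsep H X Y <= #|J| by apply: (cover_boundedP _ _ _ _ bS).
have JK : #|J| <= #|K| := optimal_card_le XH iK SD optA.
have KSJ := optimal_is_KS XH SN optA.
case: (eqVneq J K) => [eJ | JnK].
  exists [:: S]; split.
  - by split; [rewrite /attribute /= S0 | rewrite -eJ].
  - by rewrite /rank big_seq1 /excess -eJ -(addnK (rsep H X Y) #|S|) leq_sub2r.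
  - by rewrite /= SH SK.
have [nH' iK' rJ NX DJ] := Pr_optimal XH XY iK KN SD bS maxS optA.
have KN' : K != nbh (Pr H X Y J) X by rewrite NX eq_sym.
have S1 : 0 < #|S| by rewrite card_gt0.
have excK' : excess (Pr H X Y J) X Y K < n.
  by move: excK; rewrite /excess rJ -/J; clear -bndS S1 JK; lia.
have [ss [cw rk inv]] := IHn _ excK' (X_sub_gv_Pr _ _ XH) XY nH' iK' KN'.
exists (S :: ss); split.
- exact: compound_witness_cons nH KSJ S0 (disjointWl SD DJ) DJ inv cw.
- by move: rk; rewrite /rank big_cons /excess rJ -/J; clear -bndS JK; lia.
rewrite /= SH SK; apply/allP=> T /(allP inv)/andP[TJ ->].
by rewrite (subset_trans TJ) ?subsetDl.
Qed.

Theorem theorem2 (V : finType) (G : graph V) (X Y K : {set V}) :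
  X \subset gv G -> Y \subset gv G -> [disjoint X & Y] ->
  normalized G X Y ->
  important G X Y K ->
  K != nbh G X ->
  exists ss : seq {set V},
    compound_witness G X Y ss K /\ rank ss <= excess G X Y K.
Proof.
move=> XG _ XY nG iK KN.
have [ss [cw rk _]] := important_compound_witness (leqnn (excess G X Y K).+1) XG XY nG iK KN.
by exists ss.
Qed.
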